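(* Assume the standing setting and Assumptions (A1), (A2), (A3) described in the context. Then the Riccati difference equation $\Sigma_k=A_k\Sigma_{k+1}\Theta(\Sigma_{k+1})^{-1}A_k^\top+B_k\bar R_k^{-1}B_k^\top$, $k\in\mathcal{T}$, $\Sigma_N=0$, where $\Theta(\Sigma_{k+1})=I+\bar Q_k\Sigma_{k+1}$, admits a unique solution $\{\Sigma_k\}$ consisting of symmetric positive semidefinite matrices, and moreover $\Theta(\Sigma_{k+1})$ is invertible for every $k\in\mathcal{T}$.
   Context: Fix integers $N\ge 1$, $n,m\ge1$, $\mathcal{T}=\{0,\dots,N-1\}$. (A1): $A_k,C_k\in\mathbb{R}^{n\times n}$, $B_k\in\mathbb{R}^{n\times m}$ are deterministic matrices for $k\in\mathcal{T}$ (and a square-integrable process $q$ with $q_k$ $\mathcal{F}_{k-1}$-measurable is given). (A2): $G_0\in\mathbb{S}^n$, $Q_k\in\mathbb{S}^n$, $R_k\in\mathbb{S}^m$, $S_k\in\mathbb{R}^{m\times n}$ deterministic (and square-integrable processes $\eta,\rho$ with $\eta_k,\rho_k$ $\mathcal{F}_{k-1}$-measurable are given). (A3): $G_0\ge0$, $R_k$ uniformly positive definite, and $Q_k-S_k^\top R_k^{-1}S_k\ge0$ for all $k\in\mathcal{T}$. Here $\mathbb{S}^d$ denotes real symmetric $d\times d$ matrices. Define matrices $H_0,\dots,H_N$ by the forward recursion $H_0=G_0$, $H_{k+1}=A_k^\top H_kA_k+(A_k^\top H_kB_k)R_k^{-1}(B_k^\top H_kA_k)$, $k\in\mathcal{T}$.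 Set $\bar Q_k=Q_k-S_k^\top R_k^{-1}S_k$ and $\bar R_k=R_k+B_k^\top H_kB_k$. *)

From HB Require Import structures.
From mathcomp Require Import all_boot all_order all_algebra.
Set Implicit Arguments. Unset Strict Implicit. Unset Printing Implicit Defensive.
Import Order.TTheory GRing.Theory Num.Theory.
Local Open Scope ring_scope.

Definition psd (R : realFieldType) (n : nat) (M : 'M[R]_n) : Prop :=
  M^T = M /\ forall x : 'cV[R]_n, 0 <= (x^T *m M *m x) 0 0.

Definition pd (R : realFieldType) (n : nat) (M : 'M[R]_n) : Prop :=
  forall x : 'cV[R]_n, x != 0 -> 0 < (x^T *m M *m x) 0 0.

Fixpoint Hseq (R : realFieldType) (n m : nat) (G0 : 'M[R]_n)
  (A : nat -> 'M[R]_n) (B : nat -> 'M[R]_(n, m)) (Rm : nat -> 'M[R]_m)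
  (k : nat) : 'M[R]_n :=
  match k with
  | 0 => G0
  | k'.+1 =>
      let H := Hseq G0 A B Rm k' in
      (A k')^T *m H *m A k'
        + ((A k')^T *m H *m B k') *m invmx (Rm k') *m ((B k')^T *m H *m A k')
  end.

(* The solution is forced: the recursion runs backwards from [Sigma_N = 0], so
   existence and uniqueness only require every step to be defined, i.e. [Rbar_k]
   and [Theta(Sigma_(k+1)) = I + Qbar_k Sigma_(k+1)] to be invertible, and
   positive semidefiniteness to propagate.  [H_k] is psd by forward induction,
   so [Rbar_k = R_k + B_k^T H_k B_k] is positive definite.  If [X] and [Q] are
   psd and [(I + Q X) x = 0], then [x^T X x = - (X x)^T Q (X x)]; both sides
   vanish, hence [Q X x = 0] and [x = 0], so [I + Q X] is invertible.  Finally
   [X (I + Q X)^-1] is congruent to [X + X Q X], hence psd. *)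

From HB Require Import structures.
From mathcomp Require Import all_boot all_order all_algebra.
From mathcomp Require Import ring.
Import Order.TTheory GRing.Theory Num.Theory.
Set Implicit Arguments. Unset Strict Implicit. Unset Printing Implicit Defensive.
Local Open Scope ring_scope.

Section Psd.

Variable R : realFieldType.

Lemma psd0 n : psd (0 : 'M[R]_n).
Proof. by split=> [|x]; rewrite ?trmx0 // mulmx0 mul0mx mxE. Qed.

Lemma psdD n (A B : 'M[R]_n) : psd A -> psd B -> psd (A + B).
Proof.
case=> sA formA [sB formB]; split; first by rewrite linearD /= sA sB.
by move=> x; rewrite mulmxDr mulmxDl mxE addr_ge0.
Qed.

Lemma psd_congr n p (P : 'M[R]_(n, p)) (M : 'M[R]_p) :
  psd M -> psd (P *m M *m P^T).
Proof.
case=> sM formM; split; first by rewrite !trmx_mul trmxK sM mulmxA.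
by move=> x; have := formM (P^T *m x); rewrite trmx_mul trmxK !mulmxA.
Qed.

Lemma pd_form_ge0 n (M : 'M[R]_n) :
  pd M -> forall x : 'cV[R]_n, 0 <= (x^T *m M *m x) 0 0.
Proof.
move=> pdM x; have [->|x0] := eqVneq x 0; first by rewrite mulmx0 mxE.
exact/ltW/pdM.
Qed.

Lemma pdD_psd n (A B : 'M[R]_n) : pd A -> psd B -> pd (A + B).
Proof.
move=> pdA [_ formB] x x0; rewrite mulmxDr mulmxDl mxE.
exact: ltr_wpDr (formB x) (pdA x x0).
Qed.

Lemma form_trmx n p (x : 'cV[R]_n) (M : 'M[R]_(n, p)) (y : 'cV[R]_p) :
  (x^T *m M *m y) 0 0 = (y^T *m M^T *m x) 0 0.
Proof.
have -> : y^T *m M^T *m x = (x^T *m M *m y)^T by rewrite !trmx_mul trmxK mulmxA.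
by rewrite [RHS]mxE.
Qed.

Lemma trmx_mul_self_eq0 n (y : 'cV[R]_n) : (y^T *m y) 0 0 = 0 -> y = 0.
Proof.
move=> /eqP; rewrite mxE psumr_eq0 => [/allP yy0|i _]; last first.
  by rewrite !mxE -expr2 sqr_ge0.
apply/matrixP => i j; rewrite [j]ord1 [RHS]mxE.
by have /= := yy0 i (mem_index_enum _); rewrite !mxE -expr2 sqrf_eq0 => /eqP.
Qed.

Lemma ge0_linear_quadratic_eq0 (a b : R) :
  0 <= b -> (forall t, 0 <= t * a + t ^+ 2 * b) -> a = 0.
Proof.
move=> b0 nonneg; have b1 : 0 < b + 1 by rewrite ltr_wpDl.
have := nonneg (- a / (b + 1)).
have -> : - a / (b + 1) * a + (- a / (b + 1)) ^+ 2 * b = - (a / (b + 1)) ^+ 2.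
  by field; rewrite lt0r_neq0.
rewrite oppr_ge0 => le0; apply/eqP.
have /eqP : (a / (b + 1)) ^+ 2 = 0 by apply/eqP; rewrite eq_le le0 sqr_ge0.
by rewrite sqrf_eq0 mulf_eq0 invr_eq0 (negPf (lt0r_neq0 b1)) orbF.
Qed.

Lemma psd_form_eq0 n (M : 'M[R]_n) (x : 'cV[R]_n) :
  psd M -> (x^T *m M *m x) 0 0 = 0 -> M *m x = 0.
Proof.
case=> sM formM qx; set y := M *m x.
have yMx : (y^T *m M *m x) 0 0 = (y^T *m y) 0 0 by rewrite -mulmxA.
have xMy : (x^T *m M *m y) 0 0 = (y^T *m y) 0 0 by rewrite form_trmx sM.
have : (y^T *m y) 0 0 *+ 2 = 0.
  apply: (ge0_linear_quadratic_eq0 (formM y)) => t.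
  have := formM (x + t *: y).
  have -> : (x + t *: y)^T = x^T + t *: y^T by rewrite linearD linearZ.
  rewrite !mulmxDl !mulmxDr -!scalemxAl -!scalemxAr !scalerA.
  rewrite ![((_ + _ : 'M_1) 0 0)]mxE ![((_ *: _ : 'M_1) 0 0)]mxE qx xMy yMx.
  by rewrite add0r mulr2n mulrDr expr2 addrA.
by move/eqP; rewrite mulrn_eq0 => /eqP/trmx_mul_self_eq0.
Qed.

Lemma nonunitmx_ker n (M : 'M[R]_n) :
  M \notin unitmx -> exists2 x : 'cV[R]_n, x != 0 & M *m x = 0.
Proof.
rewrite -unitmx_tr -row_free_unit -kermx_eq0 => /rowV0Pn [v /sub_kermxP vM v0].
exists v^T; first by rewrite trmx_eq0.
by apply: trmx_inj; rewrite trmx_mul trmxK vM !trmx0.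
Qed.

Lemma pd_unitmx n (M : 'M[R]_n) : pd M -> M \in unitmx.
Proof.
move=> pdM; apply/negPn/negP => /nonunitmx_ker [x x0 Mx].
by have := pdM x x0; rewrite -mulmxA Mx mulmx0 mxE ltxx.
Qed.

Lemma psd_invmx n (M : 'M[R]_n) : M^T = M -> pd M -> psd (invmx M).
Proof.
move=> sM pdM; have sMi : (invmx M)^T = invmx M by rewrite trmx_inv sM.
split=> // x; have := pd_form_ge0 pdM (invmx M *m x).
by rewrite trmx_mul sMi !mulmxA mulmxKV ?pd_unitmx.
Qed.

Lemma unitmx_1D_mul_psd n (X Q : 'M[R]_n) :
  psd X -> psd Q -> 1%:M + Q *m X \in unitmx.
Proof.
move=> [_ formX] psdQ; apply/negPn/negP => /nonunitmx_ker [x x0].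
rewrite mulmxDl mul1mx => /eqP; rewrite addr_eq0 => /eqP xE.
set u := X *m x in xE.
(* [x = - Q u] turns [x^T X x = x^T u] into [- u^T Q u] *)
have formE : (x^T *m X *m x) 0 0 = - (u^T *m Q *m u) 0 0.
  by rewrite -mulmxA -/u {1}xE -mulmxA linearN /= trmx_mul psdQ.1 mulNmx mxE.
have /(psd_form_eq0 psdQ) Qu0 : (u^T *m Q *m u) 0 0 = 0.
  by apply/eqP; rewrite eq_le psdQ.2 andbT -oppr_ge0 -formE.
by move: x0; rewrite xE -mulmxA Qu0 oppr0 eqxx.
Qed.

Lemma psd_mul_invmx_1D n (X Q : 'M[R]_n) :
  psd X -> psd Q -> psd (X *m invmx (1%:M + Q *m X)).
Proof.
move=> psdX psdQ; have unitT := unitmx_1D_mul_psd psdX psdQ.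
set T := 1%:M + Q *m X in unitT *.
have trT : T^T = 1%:M + X *m Q.
  by rewrite linearD /= trmx1 trmx_mul psdX.1 psdQ.1.
have XT : X *m T = T^T *m X by rewrite trT mulmxDr mulmxDl mulmx1 mul1mx mulmxA.
have unitTt : T^T \in unitmx by rewrite unitmx_tr.
split.
  rewrite trmx_mul trmx_inv psdX.1; apply: (canLR (mulKmx unitTt)).
  by rewrite !mulmxA -XT mulmxK.
(* substituting [x = T y], the form becomes [y^T (X + X Q X) y] *)
move=> x; set y := invmx T *m x; have xE : x = T *m y by rewrite mulKVmx.
have -> : x^T *m (X *m invmx T) *m x = y^T *m (T^T *m X) *m y.
  by rewrite {1}xE trmx_mul /y !mulmxA.
rewrite trT mulmxDl mul1mx mulmxDr mulmxDl mxE addr_ge0 ?psdX.2 //.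
by have := psdQ.2 (X *m y); rewrite trmx_mul psdX.1 !mulmxA.
Qed.

Lemma psd_riccati_step n m (A X Q : 'M[R]_n) (B : 'M[R]_(n, m)) (Rb : 'M[R]_m) :
  psd X -> psd Q -> Rb^T = Rb -> pd Rb ->
  psd (A *m X *m invmx (1%:M + Q *m X) *m A^T + B *m invmx Rb *m B^T).
Proof.
move=> psdX psdQ sRb pdRb; apply: psdD; last exact/psd_congr/psd_invmx.
by rewrite -(mulmxA A); apply/psd_congr/psd_mul_invmx_1D.
Qed.

Lemma psd_Hseq n m (G0 : 'M[R]_n) (A : nat -> 'M[R]_n)
    (B : nat -> 'M[R]_(n, m)) (Rm : nat -> 'M[R]_m) N :
  psd G0 -> (forall k, (k < N)%N -> (Rm k)^T = Rm k) ->
  (forall k, (k < N)%N -> pd (Rm k)) ->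
  forall k, (k <= N)%N -> psd (Hseq G0 A B Rm k).
Proof.
move=> psdG0 sRm pdRm; elim=> [//|k IH] kN /=.
have {IH}psdH := IH (ltnW kN).
set H := Hseq G0 A B Rm k in psdH *.
have -> : (B k)^T *m H *m A k = ((A k)^T *m H *m B k)^T.
  by rewrite !trmx_mul trmxK psdH.1 mulmxA.
apply: psdD; first by rewrite -{2}[A k]trmxK; apply: psd_congr.
by apply/psd_congr/psd_invmx; [exact: sRm | exact: pdRm].
Qed.

End Psd.

Lemma leq_down_ind (P : nat -> Prop) N :
  P N -> (forall k, (k < N)%N -> P k.+1 -> P k) -> forall k, (k <= N)%N -> P k.
Proof.
move=> PN PS k kN; rewrite -(subKn kN).
elim: (N - k)%N (leq_subr k N) => [|j IH] jN; first by rewrite subn0.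
apply: PS; first by rewrite ltn_subrL (leq_trans _ jN).
by rewrite subnSK //; apply/IH/ltnW.
Qed.

Section BackwardRecursion.

Variables (T : Type) (N : nat) (terminal : T) (step : nat -> T -> T).

Definition backward_rec k : T :=
  iteri (N - k) (fun i => step (N - i.+1)) terminal.

Lemma backward_recN : backward_rec N = terminal.
Proof. by rewrite /backward_rec subnn. Qed.

Lemma backward_recS k :
  (k < N)%N -> backward_rec k = step k (backward_rec k.+1).
Proof.
by move=> kN; rewrite /backward_rec -(subnSK kN) /= subnSK // subKn // ltnW.
Qed.

Lemma backward_rec_ind (P : T -> Prop) :
  P terminal -> (forall k x, (k < N)%N -> P x -> P (step k x)) ->
  forall k, (k <= N)%N -> P (backward_rec k).
Proof.
move=> Pterm Pstep; apply: leq_down_ind; first by rewrite backward_recN.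
by move=> k kN Pk; rewrite backward_recS //; apply: Pstep.
Qed.

Lemma backward_rec_unique (Sig : nat -> T) :
  Sig N = terminal -> (forall k, (k < N)%N -> Sig k = step k (Sig k.+1)) ->
  forall k, (k <= N)%N -> Sig k = backward_rec k.
Proof.
move=> SigN SigS; apply: leq_down_ind; first by rewrite SigN backward_recN.
by move=> k kN eqS; rewrite SigS // backward_recS // eqS.
Qed.

End BackwardRecursion.

Theorem theorem4p3 (R : realFieldType) (N n m : nat)
  (A C : nat -> 'M[R]_n) (B : nat -> 'M[R]_(n, m)) (G0 : 'M[R]_n)
  (Q : nat -> 'M[R]_n) (Rm : nat -> 'M[R]_m) (S : nat -> 'M[R]_(m, n)) :
  (0 < N)%N -> (0 < n)%N -> (0 < m)%N ->
  G0^T = G0 ->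
  (forall k, (k < N)%N -> (Q k)^T = Q k) ->
  (forall k, (k < N)%N -> (Rm k)^T = Rm k) ->
  psd G0 ->
  (forall k, (k < N)%N -> pd (Rm k)) ->
  (forall k, (k < N)%N -> psd (Q k - (S k)^T *m invmx (Rm k) *m S k)) ->
  let H := Hseq G0 A B Rm in
  let Qbar := fun k => Q k - (S k)^T *m invmx (Rm k) *m S k in
  let Rbar := fun k => Rm k + (B k)^T *m H k *m B k in
  let Theta := fun k (X : 'M[R]_n) => 1%:M + Qbar k *m X in
  let riccati := fun Sig : nat -> 'M[R]_n =>
    Sig N = 0 /\
    forall k, (k < N)%N ->
      Sig k = A k *m Sig k.+1 *m invmx (Theta k (Sig k.+1)) *m (A k)^T
              + B k *m invmx (Rbar k) *m (B k)^T in
  exists Sig : nat -> 'M[R]_n,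
    [/\ riccati Sig,
        (forall k, (k <= N)%N -> psd (Sig k)),
        (forall k, (k < N)%N -> Theta k (Sig k.+1) \in unitmx)
      & forall Sig' : nat -> 'M[R]_n, riccati Sig' ->
          forall k, (k <= N)%N -> Sig' k = Sig k].
Proof.
move=> _ _ _ _ _ sRm psdG0 pdRm psdQbar H Qbar Rbar Theta riccati.
have psdH := psd_Hseq A B psdG0 sRm pdRm.
have sRbar k : (k < N)%N -> (Rbar k)^T = Rbar k.
  move=> kN; rewrite linearD /= sRm // !trmx_mul trmxK (psdH k (ltnW kN)).1.
  by rewrite mulmxA.
have pdRbar k : (k < N)%N -> pd (Rbar k).
  move=> kN; rewrite /Rbar -{2}[B k]trmxK.
  by apply: pdD_psd; [exact: pdRm | apply/psd_congr/psdH/ltnW].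
pose step k X := A k *m X *m invmx (Theta k X) *m (A k)^T
                 + B k *m invmx (Rbar k) *m (B k)^T.
pose Sig := backward_rec N 0 step.
have riccatiSig : riccati Sig.
  by split=> [|k kN]; [exact: backward_recN | exact: backward_recS].
have psdSig : forall k, (k <= N)%N -> psd (Sig k).
  apply: (backward_rec_ind (P := @psd R n)); first exact: psd0.
  move=> k X kN psdX.
  by apply: psd_riccati_step; [|exact: psdQbar|exact: sRbar|exact: pdRbar].
exists Sig; split=> // [k kN|Sig' [Sig'N Sig'S]].
  by apply: unitmx_1D_mul_psd; [exact: psdSig | exact: psdQbar].
exact: backward_rec_unique.
Qed.
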